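(* Assume $\sigma_1(x)=\tfrac12\sigma_1''(0)(x-a_1)(x-b_1)$ with $\sigma_1''(0)\ne0$ and real $a_1,b_1$, and $\tau'(0)=-\frac{\frac12\sigma_1''(0)}{1-q^{-1}}$, so that $\sigma_2$ has degree one, $\sigma_2(x)=\sigma_2'(0)(x-a_2)$ with $\sigma_2'(0)\ne0$. Let $\Lambda_q:=a_1+b_1-\frac{(1-q^{-1})\tau(0)}{\frac12\sigma_1''(0)}$ and assume $a_1<0<b_1<a_2$ and $\Lambda_q<0$. Put $a=a_1$, $b=b_1$ and $$\rho(x)=\frac{(qx/a,\,qx/b;q)_\infty}{(x/a_2;q)_\infty}.$$ Then there exist polynomials $P_n$, $n\in\mathbb{N}_0$, with $P_n$ of degree $n$ a solution of the q-EHT with $\lambda=\lambda_n$, and nonzero constants $d_n^2$, such that for all $m,n\in\mathbb{N}_0$ $$\int_a^bP_n(x)P_m(x)\rho(x)\,d_qx=d_n^2\delta_{mn},$$ i.e. orthogonality with respect to $\rho$ supported on $\{q^ka\}_{k\in\mathbb{N}_0}\cup\{q^kb\}_{k\in\mathbb{N}_0}$.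
   Context: Throughout $0<q<1$. For a function $y$ and $\zeta\in\{q,q^{-1}\}$, $D_\zeta y(x)=\frac{y(x)-y(\zeta x)}{(1-\zeta)x}$ for $x\ne0$ and $D_\zeta y(0)=y'(0)$; $[n]_q=\frac{1-q^n}{1-q}$. Let $\sigma_1$ be a real polynomial of degree at most two, $\tau(x)=\tau'(0)x+\tau(0)$ a real polynomial with $\tau'(0)\ne0$, and $\sigma_2(x):=q[\sigma_1(x)+(1-q^{-1})x\tau(x)]$. The q-EHT with parameter $n$ is $\sigma_1(x)D_{q^{-1}}D_qy(x)+\tau(x)D_qy(x)+\lambda_ny(x)=0$, $\lambda_n=-[n]_q\big(\tau'(0)+\tfrac12[n-1]_{q^{-1}}\sigma_1''(0)\big)$. $(\beta;q)_\infty=\prod_{k\ge0}(1-\beta q^k)$, $(\beta_1,\dots,\beta_r;q)_\infty=\prod_i(\beta_i;q)_\infty$. For $a<0<b$, $\int_a^b f(x)\,d_qx=(1-q)b\sum_{j\ge0}q^jf(q^jb)+(1-q)(-a)\sum_{j\ge0}q^jf(q^ja)$. *)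

From HB Require Import structures.
From mathcomp Require Import all_boot all_order all_algebra.
From mathcomp Require Import all_classical all_reals all_analysis.
Set Implicit Arguments. Unset Strict Implicit. Unset Printing Implicit Defensive.
Import Order.TTheory GRing.Theory Num.Theory.
Import numFieldNormedType.Exports.
Local Open Scope ring_scope.

Section QDefs.
Variable R : realType.

Definition Dq (z : R) (y : R -> R) (x : R) : R :=
  if x == 0 then derive1 y 0 else (y x - y (z * x)) / ((1 - z) * x).

Definition qnum (q : R) (n : int) : R := (1 - q ^ n) / (1 - q).

Definition qpoch (q beta : R) : R :=
  limn (fun N : nat => \prod_(k < N) (1 - beta * q ^+ k)).

Definition qpsum (q c : R) (f : R -> R) (N : nat) : R :=
  \sum_(j < N) q ^+ j * f (q ^+ j * c).

(* Jackson q-integral over [a,b], a < 0 < b *)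
Definition qint (q a b : R) (f : R -> R) : R :=
  (1 - q) * b * limn (qpsum q b f) + (1 - q) * (- a) * limn (qpsum q a f).

Definition sigma2 (q : R) (s1 tau : {poly R}) : {poly R} :=
  q *: (s1 + (1 - q^-1) *: ('X * tau)).

Definition lambda_n (q : R) (s1 tau : {poly R}) (n : nat) : R :=
  - qnum q n%:Z * ((tau^`()).[0] + 2^-1 * qnum q^-1 (n%:Z - 1) * (s1^`(2)).[0]).

Definition solves_qEHT (q : R) (s1 tau : {poly R}) (n : nat) (P : {poly R}) : Prop :=
  forall x : R,
    s1.[x] * Dq q^-1 (Dq q (fun t => P.[t])) x + tau.[x] * Dq q (fun t => P.[t]) x
    + lambda_n q s1 tau n * P.[x] = 0.

Definition rho (q a b a2 : R) (x : R) : R :=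
  qpoch q (q * x / a) * qpoch q (q * x / b) / qpoch q (x / a2).

End QDefs.

From HB Require Import structures.
From mathcomp Require Import all_boot all_order all_algebra.
From mathcomp Require Import all_classical all_reals all_analysis.
From mathcomp.algebra_tactics Require Import ring lra.
From mathcomp Require Import zify.
Import Order.TTheory GRing.Theory Num.Theory.
Import numFieldNormedType.Exports.
Local Open Scope classical_set_scope.
Local Open Scope ring_scope.
Set Implicit Arguments. Unset Strict Implicit. Unset Printing Implicit Defensive.

(* The q-EHT operator L p = s1 D_{q^-1} D_q p + tau D_q p maps polynomials of degree <= i
   to themselves and is triangular on the monomials with diagonal entries -lambda_i. The
   condition on tau'(0) gives lambda_i = c (q^-i - 1) with c != 0, so the diagonal entries are
   distinct and back substitution yields a polynomial eigenvector P_n of each degree n.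
   The weight rho obeys the q-Pearson relation rho(qx) s1(qx) q = rho(x) sigma2(x) on the
   lattice {q^k a} u {q^k b}, which turns (lambda_m - lambda_n) x P_n(x) P_m(x) rho(x) into a
   difference B(qx) - B(x) of a boundary term. B vanishes at a and b, where s1 does, and
   B(q^N a), B(q^N b) have the same limit, so the two Jackson sums cancel when
   lambda_m != lambda_n. The norms are positive because rho > 0 on the lattice and a nonzero
   polynomial cannot vanish at all the points q^k b. *)

Section QPochhammer.
Variables (R : realType) (q c : R).
Hypotheses (q_gt0 : 0 < q) (q_lt1 : q < 1) (c_ge0 : 0 <= c) (c_lt1 : c < 1).

Definition qpoch_part (be : R) (N : nat) : R := \prod_(k < N) (1 - be * q ^+ k).

Lemma sum_expr_le_inv N : \sum_(k < N) q ^+ k <= (1 - q)^-1.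
Proof.
have hq : 0 < 1 - q by rewrite subr_gt0.
have E : (1 - q) * \sum_(k < N) q ^+ k = 1 - q ^+ N by rewrite -opprB mulNr -subrX1 opprB.
rewrite -(ler_pM2l hq) mulfV ?gt_eqF // E.
have := exprn_ge0 N (ltW q_gt0); lra.
Qed.

Lemma one_sub_expR_bounds y : y <= c ->
  expR (- (`|y| / (1 - c))) <= 1 - y <= expR `|y|.
Proof.
move=> yc; have hc : 0 < 1 - c by rewrite subr_gt0.
apply/andP; split; last first.
  apply: le_trans (expR_ge1Dx _); have := ler_norm (- y); rewrite normrN; lra.
have [hy|hy] := lerP y 0.
  apply: (@le_trans _ _ 1); last by lra.
  by rewrite expR_le1 oppr_le0 divr_ge0 // ltW.
rewrite gtr0_norm // expRN -(ler_pM2r (expR_gt0 (y / (1 - c)))).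
rewrite mulVf ?gt_eqF ?expR_gt0 //.
set z := y / (1 - c).
have hz : 0 <= z by rewrite divr_ge0 ?ltW.
have hzc : z * (1 - c) = y by rewrite /z mulfVK ?gt_eqF.
have zcy : 0 <= z * (c - y) by rewrite mulr_ge0 // subr_ge0.
apply: (@le_trans _ _ ((1 - y) * (1 + z))); first by nra.
by apply: ler_wpM2l; [lra | exact: expR_ge1Dx].
Qed.

Lemma mulr_expr_le be k : be <= c -> be * q ^+ k <= c.
Proof.
move=> bec; have h0 := exprn_ge0 k (ltW q_gt0).
have [hb|hb] := lerP be 0; first by apply: le_trans c_ge0; rewrite mulr_le0_ge0.
apply: le_trans bec; rewrite -[leRHS]mulr1; apply: ler_wpM2l; first exact: ltW.
by apply: exprn_ile1; apply: ltW.
Qed.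

Lemma qpoch_part_bounds be N : be <= c ->
  expR (- (`|be| / ((1 - c) * (1 - q)))) <= qpoch_part be N <= expR (`|be| / (1 - q)).
Proof.
move=> bec; have hc : 0 < 1 - c by rewrite subr_gt0.
have geo := sum_expr_le_inv N.
have norm_k k : `|be * q ^+ k| = `|be| * q ^+ k.
  by rewrite normrM (ger0_norm (exprn_ge0 _ (ltW q_gt0))).
have fac k := one_sub_expR_bounds (mulr_expr_le k bec).
apply/andP; split.
- apply: (@le_trans _ _ (\prod_(k < N) expR (- (`|be * q ^+ k| / (1 - c))))).
    rewrite -expR_sum ler_expR.
    under eq_bigr do rewrite norm_k mulrAC -mulNr.
    rewrite -mulr_sumr invfM mulrA mulNr lerN2.
    by apply: ler_wpM2l geo; rewrite divr_ge0 ?normr_ge0 ?ltW.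
  apply: ler_prod => k _; have /andP[-> _] := fac k; rewrite andbT.
  by rewrite ltW ?expR_gt0.
- apply: (@le_trans _ _ (\prod_(k < N) expR `|be * q ^+ k|)).
    apply: ler_prod => k _; have /andP[h1 ->] := fac k.
    by rewrite andbT (le_trans (ltW (expR_gt0 _)) h1).
  rewrite -expR_sum ler_expR.
  under eq_bigr do rewrite norm_k.
  by rewrite -mulr_sumr ler_wpM2l.
Qed.

Lemma qpoch_partS be N : qpoch_part be N.+1 = qpoch_part be N * (1 - be * q ^+ N).
Proof. by rewrite /qpoch_part big_ord_recr. Qed.

Lemma qpoch_part_ge0 be N : be <= c -> 0 <= qpoch_part be N.
Proof.
by move=> bec; have /andP[h _] := qpoch_part_bounds N bec; exact: le_trans (ltW (expR_gt0 _)) h.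
Qed.

Lemma is_cvg_qpoch_part be : be <= c -> cvgn (qpoch_part be).
Proof.
move=> bec; have pos N := qpoch_part_ge0 N bec.
have qN_ge0 N := exprn_ge0 N (ltW q_gt0).
have [hb|hb] := lerP be 0.
- apply: cvgP; apply: nondecreasing_cvgn.
    apply/nondecreasing_seqP => N; rewrite qpoch_partS -{1}[qpoch_part be N]mulr1 ler_wpM2l //.
    by have := qN_ge0 N; nra.
  exists (expR (`|be| / (1 - q))) => _ [N _ <-].
  by have /andP[_ ->] := qpoch_part_bounds N bec.
- apply: cvgP; apply: nonincreasing_cvgn.
    apply/nonincreasing_seqP => N; rewrite qpoch_partS -{2}[qpoch_part be N]mulr1 ler_wpM2l //.
    by have := qN_ge0 N; nra.
  by exists 0 => _ [N _ <-]; apply: pos.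
Qed.

Lemma qpoch_bounds be : be <= c ->
  expR (- (`|be| / ((1 - c) * (1 - q)))) <= qpoch q be <= expR (`|be| / (1 - q)).
Proof.
move=> bec; have C := is_cvg_qpoch_part bec.
apply/andP; split.
- by apply: limr_ge => //; apply: nearW => N; have /andP[] := qpoch_part_bounds N bec.
- by apply: limr_le => //; apply: nearW => N; have /andP[] := qpoch_part_bounds N bec.
Qed.

Lemma qpoch_gt0 be : be <= c -> 0 < qpoch q be.
Proof. by move=> bec; have /andP[h _] := qpoch_bounds bec; exact: lt_le_trans (expR_gt0 _) h. Qed.

Lemma qpochS be : be <= c -> qpoch q be = (1 - be) * qpoch q (q * be).
Proof.
move=> bec.
have qbec : q * be <= c by rewrite mulrC -[q]expr1 mulr_expr_le.
have shift N : qpoch_part be (N + 1) = (1 - be) * qpoch_part (q * be) N.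
  rewrite addn1 /qpoch_part big_ord_recl expr0 mulr1; congr (_ * _).
  by apply: eq_bigr => i _; rewrite /bump /= exprS mulrA [be * q]mulrC.
have lim1 : (qpoch_part be (N + 1) @[N --> \oo] --> qpoch q be).
  by rewrite cvg_shiftn; exact: is_cvg_qpoch_part.
have lim2 : (qpoch_part be (N + 1) @[N --> \oo] --> (1 - be) * qpoch q (q * be)).
  by under eq_fun do rewrite shift; apply: cvgMl_tmp; exact: is_cvg_qpoch_part.
exact: cvg_unique lim1 lim2.
Qed.

Lemma qpoch_cvg1 (u : nat -> R) : (forall N, u N <= c) -> (u N @[N --> \oo] --> (0 : R)) ->
  (qpoch q (u N) @[N --> \oo] --> (1 : R)).
Proof.
move=> uc u0.
have norm0 : (`|u N| @[N --> \oo] --> (0 : R)) by rewrite -(@normr0 _ R); apply: cvg_norm.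
have expR_cvg1 K : (expR (K * `|u N|) @[N --> \oo] --> (1 : R)).
  rewrite -expR0; apply: (continuous_cvg _ (@continuous_expR R 0)).
  by rewrite -(mulr0 K); apply: cvgMl_tmp.
apply: (squeeze_cvgr _ (expR_cvg1 (- ((1 - c) * (1 - q))^-1)) (expR_cvg1 (1 - q)^-1)).
apply: nearW => N; have := qpoch_bounds (uc N).
by rewrite mulNr ![_^-1 * _]mulrC.
Qed.

End QPochhammer.

Section QDerivativePoly.
Variables (R : realType) (z : R).
Implicit Types p r : {poly R}.

Definition qnat (n : nat) : R := \sum_(i < n) z ^+ i.

Definition qderiv (p : {poly R}) : {poly R} := \poly_(i < size p) (qnat i.+1 * p`_i.+1).

Lemma qnat0 : qnat 0 = 0. Proof. by rewrite /qnat big_ord0. Qed.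
Lemma qnat1 : qnat 1 = 1. Proof. by rewrite /qnat big_ord1 expr0. Qed.

Lemma mul_subr_qnat n : (1 - z) * qnat n = 1 - z ^+ n.
Proof. by rewrite -opprB mulNr -subrX1 opprB. Qed.

Lemma qnatE n : z != 1 -> qnat n = (1 - z ^+ n) / (1 - z).
Proof.
by move=> z1; rewrite -mul_subr_qnat mulrC mulKf // subr_eq0 eq_sym.
Qed.

Lemma coef_qderiv p i : (qderiv p)`_i = qnat i.+1 * p`_i.+1.
Proof.
rewrite coef_poly; case: ltnP => // h.
by rewrite nth_default ?mulr0 // (leq_trans h).
Qed.

Lemma qderivDZ p r c : qderiv (p + c *: r) = qderiv p + c *: qderiv r.
Proof. by apply/polyP => i; rewrite coefD coefZ !coef_qderiv coefD coefZ; ring. Qed.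

Lemma horner_qderiv p x : p.[x] - p.[z * x] = (1 - z) * x * (qderiv p).[x].
Proof.
have size_qderiv : (size (qderiv p) <= size p)%N by exact: size_poly.
rewrite (horner_coef_wide x size_qderiv).
rewrite (horner_coef_wide x (leqnSn _)) (horner_coef_wide (z * x) (leqnSn _)).
rewrite -sumrB big_ord_recl /= !expr0 !mulr1 subrr add0r mulr_sumr.
apply: eq_bigr => i _; rewrite coef_qderiv /bump /= exprMn.
have zE : z ^+ i.+1 = 1 - (1 - z) * qnat i.+1 by rewrite mul_subr_qnat; ring.
by rewrite zE exprS; ring.
Qed.

Lemma Dq_horner p : z != 1 -> Dq z (horner p) = horner (qderiv p).
Proof.
move=> z1; apply: funext => x; rewrite /Dq; case: eqP => [->|/eqP x0].
  by rewrite -derivE !horner_coef0 coef_deriv coef_qderiv qnat1 mul1r.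
rewrite horner_qderiv mulrC mulKf //.
by rewrite mulf_neq0 // subr_eq0 eq_sym.
Qed.
End QDerivativePoly.

Section TriangularEigenpoly.
Variables (R : fieldType) (T : {poly R} -> {poly R}) (m : nat -> R) (n : nat).
Hypothesis T_DZ : forall p r c, T (p + c *: r) = T p + c *: T r.
Hypothesis coef_T : forall (p : {poly R}) i, (size p <= i.+1)%N -> (T p)`_i = m i * p`_i.
Hypothesis m_neq : forall i, (i < n)%N -> m i != m n.

Let residual p := T p - m n *: p.

(* One step of back substitution: the correction c X^e kills the coefficient of index e of the residual. *)
Lemma residual_correction (Q : {poly R}) e : (e < n)%N ->
  (size Q <= n.+1)%N -> Q`_n = 1 -> (forall i, (e < i)%N -> (residual Q)`_i = 0) ->
  exists Q' : {poly R}, [/\ (size Q' <= n.+1)%N, Q'`_n = 1 &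
    forall i, (e <= i)%N -> (residual Q')`_i = 0].
Proof.
move=> en sQ Qn resQ.
have me : m e - m n != 0 by rewrite subr_eq0 m_neq.
set c := - (residual Q)`_e / (m e - m n).
exists (Q + c *: 'X^e); split.
- rewrite (leq_trans (size_polyD _ _)) // geq_max sQ.
  by rewrite (leq_trans (size_scale_leq _ _)) // size_polyXn ltnS ltnW.
- by rewrite coefD coefZ coefXn Qn gtn_eqF // mulr0 addr0.
- move=> i ei.
  have -> : residual (Q + c *: 'X^e) = residual Q + c *: residual 'X^e.
    by rewrite /residual T_DZ; apply/polyP => k; rewrite !(coefD, coefN, coefZ); ring.
  have resX : (residual 'X^e)`_i = (m i - m n) * 'X^e`_i.
    by rewrite /residual coefB coefZ coef_T ?size_polyXn //; ring.
  rewrite coefD coefZ resX coefXn.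
  have [<-|ne] := eqVneq e i; first by rewrite /c mulr1; field.
  rewrite /= mulr0n !mulr0 addr0; apply: resQ.
  by rewrite ltn_neqAle ne.
Qed.

Lemma triangular_eigenpoly : exists P : {poly R}, size P = n.+1 /\ T P = m n *: P.
Proof.
have approx j : (j <= n)%N -> exists Q : {poly R}, [/\ (size Q <= n.+1)%N, Q`_n = 1 &
    forall i, (n - j <= i)%N -> (residual Q)`_i = 0].
  elim: j => [_|j IH jn].
    exists 'X^n; split; rewrite ?size_polyXn ?coefXn ?eqxx // => i; rewrite subn0 => ni.
    rewrite /residual coefB coefZ coef_T ?size_polyXn // coefXn.
    by case: eqP => [->|_]; rewrite ?mulr0 ?mulr1 subrr.
  have [Q [sQ Qn resQ]] := IH (ltnW jn).
  have en : (n - j.+1 < n)%N by lia.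
  have resQ1 i : (n - j.+1 < i)%N -> (residual Q)`_i = 0 by move=> hi; apply: resQ; lia.
  have [Q' [sQ' Qn' resQ']] := residual_correction en sQ Qn resQ1.
  by exists Q'.
have [Q [sQ Qn resQ]] := approx n (leqnn n).
exists Q; split.
- apply/eqP; rewrite eqn_leq sQ /=; rewrite ltnNge; apply/negP => hs.
  by move: Qn; rewrite nth_default // => /eqP; rewrite eq_sym oner_eq0.
- apply/eqP; rewrite -subr_eq0; apply/eqP/polyP => i; rewrite coef0; apply: resQ.
  by rewrite subnn.
Qed.

End TriangularEigenpoly.

Lemma horner0_deriv (R : nzRingType) (p : {poly R}) : (p^`()).[0] = p`_1.
Proof. by rewrite horner_coef0 coef_deriv mulr1n. Qed.

Lemma horner0_derivn2 (R : nzRingType) (p : {poly R}) : (p^`(2)).[0] = 2 * p`_2.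
Proof. by rewrite horner_coef0 coef_derivn addn0 ffactnn (_ : 2`! = 2)%N // mulr_natl. Qed.

Section QEHTOperator.
Variables (R : realType) (q : R) (s1 tau : {poly R}).
Hypotheses (q_gt0 : 0 < q) (q_lt1 : q < 1).
Hypotheses (size_s1 : (size s1 <= 3)%N) (size_tau : (size tau <= 2)%N).
Implicit Types p r P : {poly R}.

Definition qEHT_op (p : {poly R}) : {poly R} :=
  s1 * qderiv q^-1 (qderiv q p) + tau * qderiv q p.

(* Diagonal entry of qEHT_op in the monomial basis. *)
Definition qEHT_eigval (n : nat) : R :=
  s1`_2 * qnat q^-1 n.-1 * qnat q n + tau`_1 * qnat q n.

Let q_neq0 : q != 0. Proof. by rewrite gt_eqF. Qed.
Let q_neq1 : q != 1. Proof. by rewrite lt_eqF. Qed.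
Let qV_neq1 : q^-1 != 1. Proof. by rewrite invr_eq1. Qed.
Let subr1q_neq0 : 1 - q != 0. Proof. by rewrite subr_eq0 eq_sym. Qed.
Let subrq1_neq0 : q - 1 != 0. Proof. by rewrite subr_eq0. Qed.

Lemma qEHT_opDZ p r c : qEHT_op (p + c *: r) = qEHT_op p + c *: qEHT_op r.
Proof. by rewrite /qEHT_op !qderivDZ !mulrDr -!scalerAr scalerDr addrACA. Qed.

Lemma coef_qEHT_op p i : (size p <= i.+1)%N -> (qEHT_op p)`_i = qEHT_eigval i * p`_i.
Proof.
move=> sp; rewrite /qEHT_eigval.
have Es : s1 = (s1`_0)%:P + (s1`_1)%:P * 'X + (s1`_2)%:P * 'X^2.
  apply/polyP => j; rewrite !coefD coefC !coefCM coefX coefXn.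
  case: j => [|[|[|j]]] /=; rewrite ?mulr0 ?mulr1 ?addr0 ?add0r //.
  by rewrite nth_default // (leq_trans size_s1).
have Et : tau = (tau`_0)%:P + (tau`_1)%:P * 'X.
  apply/polyP => j; rewrite !coefD coefC !coefCM coefX.
  case: j => [|[|j]] /=; rewrite ?mulr0 ?mulr1 ?addr0 ?add0r //.
  by rewrite nth_default // (leq_trans size_tau).
have p1 : p`_i.+1 = 0 by rewrite nth_default.
have p2 : p`_i.+2 = 0 by rewrite nth_default // (leq_trans sp).
rewrite /qEHT_op [in LHS]Es [in LHS]Et !mulrDl -!mulrA !coefD !coefCM !coefXM.
by case: i sp p1 p2 => [|[|k]] sp p1 p2 /=; rewrite !coef_qderiv ?p1 ?p2 ?qnat0 ?qnat1; ring.
Qed.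

Lemma lambda_nE n : lambda_n q s1 tau n = - qEHT_eigval n.
Proof.
rewrite /lambda_n /qEHT_eigval horner0_derivn2 horner0_deriv /qnum.
case: n => [|k]; first by rewrite qnat0 expr0z subrr mul0r; ring.
have -> : (Posz k.+1 - 1 = Posz k)%R by rewrite -addn1 PoszD addrK.
by rewrite -!exprnP !qnatE //=; field; rewrite subr1q_neq0 q_neq0 subrq1_neq0.
Qed.

Hypothesis tau1E : tau`_1 = - s1`_2 / (1 - q^-1).

Lemma qEHT_eigvalE n : qEHT_eigval n = s1`_2 * q ^+ 2 * (q^-1 ^+ n - 1) / (1 - q) ^+ 2.
Proof.
rewrite /qEHT_eigval tau1E.
case: n => [|k]; first by rewrite qnat0 expr0 subrr; ring.
have qk : q ^+ k != 0 by rewrite expf_neq0.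
rewrite /= !qnatE // !exprVn exprS invfM.
by field; rewrite q_neq0 qk subr1q_neq0 subrq1_neq0.
Qed.

Hypothesis s1_2_neq0 : s1`_2 != 0.

Lemma qEHT_eigval_inj : injective qEHT_eigval.
Proof.
move=> i j; rewrite !qEHT_eigvalE => E.
set C := s1`_2 * q ^+ 2 / (1 - q) ^+ 2.
have C_neq0 : C != 0 by rewrite !mulf_neq0 ?invr_eq0 ?expf_neq0.
have : C * (q^-1 ^+ i - 1) = C * (q^-1 ^+ j - 1) by rewrite mulrAC E mulrAC.
by move/(mulfI C_neq0)/addIr; apply: ieexprIn; rewrite ?invr_gt0.
Qed.

Lemma qEHT_eigenpoly n : exists P : {poly R}, size P = n.+1 /\ qEHT_op P = qEHT_eigval n *: P.
Proof.
apply: triangular_eigenpoly; [exact: qEHT_opDZ | exact: coef_qEHT_op |].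
by move=> i /ltn_eqF in_neq; apply/eqP => /qEHT_eigval_inj/eqP; rewrite in_neq.
Qed.

Lemma solves_qEHT_eigenpoly n P : qEHT_op P = qEHT_eigval n *: P -> solves_qEHT q s1 tau n P.
Proof.
move=> eigP x; rewrite Dq_horner // Dq_horner // lambda_nE.
have := congr1 (horner^~ x) eigP; rewrite /qEHT_op !hornerE => ->; ring.
Qed.

Lemma lambda_n_inj : injective (lambda_n q s1 tau).
Proof. by move=> m n; rewrite !lambda_nE => /oppr_inj/qEHT_eigval_inj. Qed.

Lemma qEHT_polynomial_solutions :
  exists P : nat -> {poly R}, forall n, size (P n) = n.+1 /\ solves_qEHT q s1 tau n (P n).
Proof.
have /choice[P PE] := qEHT_eigenpoly.
by exists P => n; have [sizeP eigP] := PE n; split; last exact: solves_qEHT_eigenpoly eigP.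
Qed.

End QEHTOperator.

Section GeometricLattice.
Variables (R : realType) (q : R).
Hypotheses (q_gt0 : 0 < q) (q_lt1 : q < 1).

Lemma lattice_cvg0 (c : R) : (q ^+ N * c @[N --> \oo] --> (0 : R)).
Proof.
by rewrite -(mul0r c); apply: cvgMr_tmp; apply: cvg_expr; rewrite ger0_norm ?ltW.
Qed.

Lemma horner_lattice_cvg (p : {poly R}) (c : R) : (p.[q ^+ N * c] @[N --> \oo] --> p.[0]).
Proof. exact: continuous_cvg _ (@continuous_horner R p 0) (lattice_cvg0 c). Qed.

(* A function with a limit at 0 is bounded on the lattice, so the series is dominated by a geometric one. *)
Lemma is_cvg_qpsum (c : R) (F : R -> R) (l : R) :
  (F (q ^+ N * c) @[N --> \oo] --> l) -> cvgn (qpsum q c F).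
Proof.
move=> Fl.
set u := fun j => q ^+ j * F (q ^+ j * c).
have -> : qpsum q c F = series u by apply: funext => N; rewrite /series /= big_mkord.
apply: normed_cvg.
have [M [_ hM]] := cvg_seq_bounded (cvgP _ Fl).
set B := `|M| + 1.
have MB : M < B by rewrite /B; have := ler_norm M; lra.
have B_ge0 : 0 <= B by rewrite /B; have := normr_ge0 M; lra.
have qN_ge0 N : 0 <= q ^+ N by rewrite exprn_ge0 ?ltW.
apply: (@series_le_cvg _ _ (geometric B q)) => [n|n|n|].
- exact: normr_ge0.
- by rewrite /geometric /= mulr_ge0.
- by rewrite /geometric /= /u normrM ger0_norm // mulrC ler_wpM2r // hM.
- by apply: is_cvg_geometric_series; rewrite ger0_norm ?ltW.
Qed.

End GeometricLattice.

Section JacksonWeight.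
Variables (R : realType) (q a b a2 : R).
Hypotheses (q_gt0 : 0 < q) (q_lt1 : q < 1) (a_lt0 : a < 0) (b_gt0 : 0 < b) (b_lt_a2 : b < a2).

Let a2_gt0 : 0 < a2. Proof. exact: lt_trans b_gt0 b_lt_a2. Qed.

(* A common bound < 1 for every q-Pochhammer argument occurring in rho on the lattice. *)
Let cw : R := Num.max q (b / a2).
Let cw_ge0 : 0 <= cw. Proof. by rewrite le_max ltW. Qed.
Let cw_lt1 : cw < 1. Proof. by rewrite gt_max q_lt1 ltr_pdivrMr // mul1r. Qed.

Lemma rho_args_le (c : R) j : c = a \/ c = b ->
  [/\ q * (q ^+ j * c) / a <= cw, q * (q ^+ j * c) / b <= cw & q ^+ j * c / a2 <= cw].
Proof.
move=> hc.
have qj_ge0 : 0 <= q ^+ j := exprn_ge0 j (ltW q_gt0).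
have qj_le1 : q ^+ j <= 1 by apply: exprn_ile1; apply: ltW.
have qqj_ge0 : 0 <= q * q ^+ j := mulr_ge0 (ltW q_gt0) qj_ge0.
have qqj_le : q * q ^+ j <= cw.
  by apply: le_trans (ler_piMr (ltW q_gt0) qj_le1) _; rewrite le_max lexx.
have a2V : 0 <= a2^-1 by rewrite invr_ge0 ltW.
have a_neq0 : a != 0 by rewrite lt_eqF.
have b_neq0 : b != 0 by rewrite gt_eqF.
case: hc => ->; split; rewrite ?mulrA ?mulfK //.
- apply: le_trans cw_ge0; apply: mulr_le0_ge0; last by rewrite invr_ge0 ltW.
  exact: mulr_ge0_le0 qqj_ge0 (ltW a_lt0).
- by apply: le_trans cw_ge0; apply: mulr_le0_ge0 a2V; apply: mulr_ge0_le0 qj_ge0 (ltW a_lt0).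
- apply: le_trans cw_ge0; apply: mulr_ge0_le0; last by rewrite invr_le0 ltW.
  exact: mulr_ge0 qqj_ge0 (ltW b_gt0).
- apply: le_trans (_ : b / a2 <= cw); last by rewrite le_max lexx orbT.
  by rewrite -mulrA; apply: ler_piMl qj_le1; rewrite divr_ge0 // ltW.
Qed.

Lemma lattice_neq0 (c : R) j : c = a \/ c = b -> q ^+ j * c != 0.
Proof.
move=> hc; apply: mulf_neq0; first by rewrite expf_neq0 // gt_eqF.
by case: hc => ->; [rewrite lt_eqF | rewrite gt_eqF].
Qed.

Lemma lattice_lt_a2 (c : R) j : c = a \/ c = b -> q ^+ j * c < a2.
Proof.
move=> hc; have [_ _ h3] := rho_args_le j hc.
by have := le_lt_trans h3 cw_lt1; rewrite ltr_pdivrMr // mul1r.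
Qed.

Lemma rho_gt0 (c : R) j : c = a \/ c = b -> 0 < rho q a b a2 (q ^+ j * c).
Proof.
move=> hc; have [h1 h2 h3] := rho_args_le j hc.
by rewrite /rho divr_gt0 ?mulr_gt0 // (qpoch_gt0 q_gt0 q_lt1 cw_ge0 cw_lt1).
Qed.

Lemma rhoS (c : R) j : c = a \/ c = b ->
  rho q a b a2 (q ^+ j * c) = rho q a b a2 (q * (q ^+ j * c)) *
    ((1 - q * (q ^+ j * c) / a) * (1 - q * (q ^+ j * c) / b) / (1 - q ^+ j * c / a2)).
Proof.
move=> hc; move: (rho_args_le j hc); move: (q ^+ j * c) => x [h1 h2 h3].
have h3' : q * x / a2 <= cw.
  by have := mulr_expr_le q_gt0 q_lt1 cw_ge0 1 h3; rewrite expr1 mulrC mulrA.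
have qpS := qpochS q_gt0 q_lt1 cw_ge0 cw_lt1.
rewrite /rho (qpS _ h1) (qpS _ h2) (qpS _ h3) !mulrA.
have P : qpoch q (q * x / a2) != 0.
  by rewrite gt_eqF // (qpoch_gt0 q_gt0 q_lt1 cw_ge0 cw_lt1).
have D : a2 - x != 0.
  rewrite subr_eq0 eq_sym lt_eqF //; move: (le_lt_trans h3 cw_lt1).
  by rewrite ltr_pdivrMr // mul1r.
by field; rewrite P D (gt_eqF a2_gt0) (gt_eqF b_gt0) (lt_eqF a_lt0).
Qed.

Lemma rho_cvg1 (c : R) : c = a \/ c = b -> (rho q a b a2 (q ^+ N * c) @[N --> \oo] --> (1 : R)).
Proof.
move=> hc.
have qpoch_lattice_cvg1 (d : R) : (forall N, q ^+ N * d <= cw) ->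
    (qpoch q (q ^+ N * d) @[N --> \oo] --> (1 : R)).
  by move=> dc; apply: qpoch_cvg1 dc (lattice_cvg0 q_gt0 q_lt1 d).
have -> : (fun N => rho q a b a2 (q ^+ N * c)) = (fun N =>
    qpoch q (q ^+ N * (q * c / a)) * qpoch q (q ^+ N * (q * c / b)) / qpoch q (q ^+ N * (c / a2))).
  by apply: funext => N; rewrite /rho !mulrA [q * q ^+ N]mulrC.
rewrite -[X in _ --> X](_ : 1 * 1 / 1 = (1 : R)); last by rewrite invr1 !mulr1.
apply: cvgM; [apply: cvgM | apply: cvgV; rewrite ?oner_eq0 //];
  apply: qpoch_lattice_cvg1 => N; have [h1 h2 h3] := rho_args_le N hc;
  by rewrite !mulrA ?(mulrC (q ^+ N) q) in h1 h2 h3 *.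
Qed.

End JacksonWeight.

(* The q-EHT operator at [x != 0], written through f0 = f x, f1 = f (q x) and fm = f (x / q). *)
Definition qEHT_at (R : realType) (q x s t f0 f1 fm : R) : R :=
  s * (((f0 - f1) / ((1 - q) * x) - (fm - f0) / ((1 - q) * (q^-1 * x))) / ((1 - q^-1) * x))
  + t * ((f0 - f1) / ((1 - q) * x)).

Lemma qEHT_atE (R : realType) (q s t x : R) (f : R -> R) : q != 0 -> x != 0 ->
  s * Dq q^-1 (Dq q f) x + t * Dq q f x = qEHT_at q x s t (f x) (f (q * x)) (f (q^-1 * x)).
Proof.
move=> q_neq0 x_neq0; have qVx_neq0 : q^-1 * x != 0 by rewrite mulf_neq0 ?invr_eq0.
by rewrite /Dq (negbTE x_neq0) (negbTE qVx_neq0) /= [q * (q^-1 * x)]mulrA mulfV // mul1r.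
Qed.

(* Discrete Green identity at one point; r stands for rho x and r1 for rho (q x) * s1 (q x). *)
Lemma qgreen_at (R : realType) (q x s t r r1 f0 f1 fm g0 g1 gm : R) :
  0 < q -> q < 1 -> x != 0 -> r1 * q = r * (q * (s + (1 - q^-1) * x * t)) ->
  x * (qEHT_at q x s t f0 f1 fm * g0 - f0 * qEHT_at q x s t g0 g1 gm) * r =
  - q ^+ 2 / (1 - q) ^+ 2 * (r1 * (f0 * g1 - g0 * f1) / (q * x) - r * s * (fm * g0 - gm * f0) / x).
Proof.
move=> q_gt0 q_lt1 x_neq0 r1E.
have q_neq0 : q != 0 by rewrite gt_eqF.
have subr1q_neq0 : 1 - q != 0 by rewrite subr_eq0 eq_sym lt_eqF.
have subrq1_neq0 : q - 1 != 0 by rewrite subr_eq0 lt_eqF.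
have -> : r1 = r * (q * (s + (1 - q^-1) * x * t)) / q by rewrite -r1E mulfK.
by rewrite /qEHT_at; field; rewrite x_neq0 q_neq0 subr1q_neq0 subrq1_neq0.
Qed.

Lemma horner_sigma2 (R : realType) (q : R) (s1 tau : {poly R}) y :
  (sigma2 q s1 tau).[y] = q * (s1.[y] + (1 - q^-1) * y * tau.[y]).
Proof. by rewrite /sigma2 !hornerE. Qed.

Section QGreen.
Variables (R : realType) (q : R) (s1 tau : {poly R}) (a b a2 : R).
Hypotheses (q_gt0 : 0 < q) (q_lt1 : q < 1) (a_lt0 : a < 0) (b_gt0 : 0 < b) (b_lt_a2 : b < a2).
Hypothesis s1E : forall x, s1.[x] = 2^-1 * (s1^`(2)).[0] * (x - a) * (x - b).
Hypothesis sigma2E : forall x, (sigma2 q s1 tau).[x] = ((sigma2 q s1 tau)^`()).[0] * (x - a2).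
Implicit Types P Q : {poly R}.

Let rh := rho q a b a2.
Let q_neq0 : q != 0. Proof. by rewrite gt_eqF. Qed.
Let K : R := - q ^+ 2 / (1 - q) ^+ 2.

Lemma rho_pearson (c : R) j : c = a \/ c = b ->
  rh (q * (q ^+ j * c)) * s1.[q * (q ^+ j * c)] * q = rh (q ^+ j * c) * (sigma2 q s1 tau).[q ^+ j * c].
Proof.
move=> hc; rewrite /rh (rhoS q_gt0 q_lt1 a_lt0 b_gt0 b_lt_a2 j hc).
move: (lattice_lt_a2 q_gt0 q_lt1 a_lt0 b_gt0 b_lt_a2 j hc); move: (q ^+ j * c) => x x_lt_a2.
set k := 2^-1 * (s1^`(2)).[0]; set S := ((sigma2 q s1 tau)^`()).[0].
have a2_neq0 : a2 != 0 by rewrite gt_eqF // (lt_trans b_gt0).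
have SE : S = - (q * (k * a * b)) / a2.
  have := sigma2E 0; rewrite horner_sigma2 s1E -/k -/S => E.
  apply: (mulIf a2_neq0); rewrite divfK // -[S * a2]opprK -mulrN -[- a2]sub0r -E; ring.
rewrite sigma2E -/S s1E -/k SE.
by field; rewrite a2_neq0 subr_eq0 gt_eqF // (lt_eqF a_lt0) (gt_eqF b_gt0).
Qed.

Definition qboundary P Q (y : R) : R :=
  rh y * s1.[y] * (P.[q^-1 * y] * Q.[y] - Q.[q^-1 * y] * P.[y]) / y.

Lemma solves_qEHT_at n P x : x != 0 -> solves_qEHT q s1 tau n P ->
  qEHT_at q x s1.[x] tau.[x] P.[x] P.[q * x] P.[q^-1 * x] = - (lambda_n q s1 tau n * P.[x]).
Proof.
move=> x_neq0 /(_ x); rewrite (qEHT_atE _ _ _ q_neq0 x_neq0) => /eqP.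
by rewrite addr_eq0 => /eqP.
Qed.

Lemma qgreen_step n m P Q x : x != 0 ->
  rh (q * x) * s1.[q * x] * q = rh x * (sigma2 q s1 tau).[x] ->
  solves_qEHT q s1 tau n P -> solves_qEHT q s1 tau m Q ->
  K * qboundary P Q x + (lambda_n q s1 tau m - lambda_n q s1 tau n) * x * (P.[x] * Q.[x] * rh x) =
  K * qboundary P Q (q * x).
Proof.
move=> x_neq0; rewrite horner_sigma2 => pearson HP HQ.
have := qgreen_at P.[x] P.[q * x] P.[q^-1 * x] Q.[x] Q.[q * x] Q.[q^-1 * x] q_gt0 q_lt1 x_neq0 pearson.
rewrite (solves_qEHT_at x_neq0 HP) (solves_qEHT_at x_neq0 HQ) /qboundary (mulrA q^-1 q) mulVf // mul1r.
rewrite -/K => E.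
have -> : (lambda_n q s1 tau m - lambda_n q s1 tau n) * x * (P.[x] * Q.[x] * rh x) =
    x * (- (lambda_n q s1 tau n * P.[x]) * Q.[x] - P.[x] * - (lambda_n q s1 tau m * Q.[x])) * rh x.
  by ring.
by rewrite E; ring.
Qed.

Lemma qpsum_telescope n m P Q (c : R) : c = a \/ c = b ->
  solves_qEHT q s1 tau n P -> solves_qEHT q s1 tau m Q -> forall N,
  (lambda_n q s1 tau m - lambda_n q s1 tau n) * c * qpsum q c (fun x => P.[x] * Q.[x] * rh x) N =
  K * qboundary P Q (q ^+ N * c).
Proof.
move=> hc HP HQ; elim => [|N IH].
  rewrite /qpsum big_ord0 /qboundary expr0 mul1r.
  have -> : s1.[c] = 0 by rewrite s1E; case: hc => ->; rewrite subrr ?mulr0 ?mul0r.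
  ring.
rewrite /qpsum big_ord_recr /= mulrDr -/(qpsum _ _ _ _) IH.
rewrite (_ : q ^+ N.+1 * c = q * (q ^+ N * c)); last by rewrite exprS mulrA.
rewrite -(qgreen_step (lattice_neq0 q_gt0 a_lt0 b_gt0 N hc) (rho_pearson N hc) HP HQ).
ring.
Qed.

Lemma qboundary_cvg P Q : exists l : R,
  forall c, c = a \/ c = b -> (qboundary P Q (q ^+ N * c) @[N --> \oo] --> l).
Proof.
pose W := (P \Po (q^-1 *: 'X)) * Q - (Q \Po (q^-1 *: 'X)) * P.
have hornerW y : W.[y] = P.[q^-1 * y] * Q.[y] - Q.[q^-1 * y] * P.[y].
  by rewrite /W !hornerE !horner_comp !hornerE.
have /factor_theorem [w Ww] : root W 0 by rewrite /root hornerW mulr0 mulrC subrr.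
exists (1 * s1.[0] * w.[0]) => c hc.
have -> : (fun N => qboundary P Q (q ^+ N * c)) =
    (fun N => rh (q ^+ N * c) * s1.[q ^+ N * c] * w.[q ^+ N * c]).
  apply: funext => N; rewrite /qboundary -hornerW Ww hornerM hornerXsubC subr0 mulrA mulfK //.
  by move: (lattice_neq0 q_gt0 a_lt0 b_gt0 N hc).
apply: cvgM; [apply: cvgM|]; last exact: horner_lattice_cvg.
- exact: rho_cvg1 q_gt0 q_lt1 a_lt0 b_gt0 b_lt_a2 c hc.
- exact: horner_lattice_cvg.
Qed.

Lemma is_cvg_qpsum_weight P Q (c : R) : c = a \/ c = b ->
  cvgn (qpsum q c (fun x => P.[x] * Q.[x] * rh x)).
Proof.
move=> hc; apply: (is_cvg_qpsum q_gt0 q_lt1 (l := P.[0] * Q.[0] * 1)).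
apply: cvgM; [apply: cvgM|]; try exact: horner_lattice_cvg.
exact: rho_cvg1 q_gt0 q_lt1 a_lt0 b_gt0 b_lt_a2 c hc.
Qed.

Lemma qint_orthogonal n m P Q :
  solves_qEHT q s1 tau n P -> solves_qEHT q s1 tau m Q ->
  lambda_n q s1 tau m != lambda_n q s1 tau n ->
  qint q a b (fun x => P.[x] * Q.[x] * rh x) = 0.
Proof.
move=> HP HQ lambda_neq.
set F := fun x => P.[x] * Q.[x] * rh x.
set dl := lambda_n q s1 tau m - lambda_n q s1 tau n.
have [l lE] := qboundary_cvg P Q.
(* The telescoping identity pins both endpoint series to the same boundary limit. *)
have endpoint_lim c : c = a \/ c = b -> dl * c * limn (qpsum q c F) = K * l.
  move=> hc.
  have lim1 : (dl * c * qpsum q c F N @[N --> \oo] --> dl * c * limn (qpsum q c F)).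
    by apply: cvgMl_tmp; exact: is_cvg_qpsum_weight.
  have lim2 : (dl * c * qpsum q c F N @[N --> \oo] --> K * l).
    by rewrite (funext (qpsum_telescope hc HP HQ)); apply: cvgMl_tmp; exact: lE.
  exact: cvg_unique lim1 lim2.
have : dl * qint q a b F = (1 - q) * (dl * b * limn (qpsum q b F) - dl * a * limn (qpsum q a F)).
  by rewrite /qint; ring.
rewrite (endpoint_lim b (or_intror erefl)) (endpoint_lim a (or_introl erefl)) subrr mulr0.
by move/eqP; rewrite mulf_eq0 subr_eq0 (negbTE lambda_neq) => /eqP.
Qed.

Lemma qpsum_norm_gt0 P : P != 0 -> 0 < qpsum q b (fun x => P.[x] * P.[x] * rh x) (size P).
Proof.
move=> P_neq0.
set F := fun x => P.[x] * P.[x] * rh x.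
have rh_gt0 j : 0 < rh (q ^+ j * b) := rho_gt0 q_gt0 q_lt1 a_lt0 b_gt0 b_lt_a2 j (or_intror erefl).
have term_ge0 j : 0 <= q ^+ j * F (q ^+ j * b).
  rewrite mulr_ge0 ?exprn_ge0 ?(ltW q_gt0) // /F -expr2.
  exact: mulr_ge0 (sqr_ge0 _) (ltW (rh_gt0 j)).
have sum_ge0 : 0 <= qpsum q b F (size P) by apply: sumr_ge0 => j _; exact: term_ge0.
rewrite lt_def sum_ge0 andbT; apply/negP => /eqP sum0.
(* Otherwise P would vanish at the size P distinct points q^j b, j < size P. *)
have P_root j : (j < size P)%N -> root P (q ^+ j * b).
  move=> jP; have := @psumr_eq0P _ _ xpredT (fun i : 'I_(size P) => q ^+ i * F (q ^+ i * b))
    (fun i _ => term_ge0 i) sum0 (Ordinal jP) isT.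
  move/eqP; rewrite /= mulf_eq0 expf_eq0 (gt_eqF q_gt0) andbF /F -expr2 mulf_eq0.
  by rewrite (gt_eqF (rh_gt0 j)) orbF sqrf_eq0.
have uniq_pts : uniq [seq q ^+ j * b | j <- iota 0 (size P)].
  rewrite map_inj_uniq ?iota_uniq // => i j /(mulIf (lt0r_neq0 b_gt0)).
  by apply: (ieexprIn q_gt0); rewrite lt_eqF.
have roots : all (root P) [seq q ^+ j * b | j <- iota 0 (size P)].
  by apply/allP => y /mapP[j]; rewrite mem_iota add0n => /andP[_ /P_root Pj] ->.
by have := max_poly_roots P_neq0 roots uniq_pts; rewrite size_map size_iota ltnn.
Qed.

Lemma qint_norm_gt0 P : P != 0 -> 0 < qint q a b (fun x => P.[x] * P.[x] * rh x).
Proof.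
move=> P_neq0.
set F := fun x => P.[x] * P.[x] * rh x.
have incr c : c = a \/ c = b -> {homo qpsum q c F : i j / (i <= j)%N >-> i <= j}.
  move=> hc; apply/nondecreasing_seqP => N; rewrite /qpsum big_ord_recr /= lerDl.
  rewrite mulr_ge0 ?exprn_ge0 ?(ltW q_gt0) // /F -expr2.
  exact: mulr_ge0 (sqr_ge0 _) (ltW (rho_gt0 q_gt0 q_lt1 a_lt0 b_gt0 b_lt_a2 N hc)).
have lim_ge c N : c = a \/ c = b -> qpsum q c F N <= limn (qpsum q c F).
  by move=> hc; apply: nondecreasing_cvgn_le (incr c hc) (is_cvg_qpsum_weight hc) N.
have lima_ge0 : 0 <= limn (qpsum q a F).
  by have := lim_ge a 0%N (or_introl erefl); rewrite {1}/qpsum big_ord0.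
have limb_gt0 := lt_le_trans (qpsum_norm_gt0 P_neq0) (lim_ge b _ (or_intror erefl)).
have sub1q_gt0 : 0 < 1 - q by rewrite subr_gt0.
rewrite /qint; apply: ltr_pwDl; first by rewrite !mulr_gt0 // ltW.
apply: mulr_ge0 _ lima_ge0; apply: mulr_ge0; [exact: ltW | by rewrite oppr_ge0 ltW].
Qed.
End QGreen.

Unset Implicit Arguments. Set Strict Implicit.

Theorem theorem5p10 (R : realType) (q : R) (s1 tau : {poly R}) (a1 b1 a2 : R) :
  0 < q < 1 ->
  (size s1 <= 3)%N ->
  (s1^`(2)).[0] != 0 ->
  (forall x, s1.[x] = 2^-1 * (s1^`(2)).[0] * (x - a1) * (x - b1)) ->
  (size tau <= 2)%N ->
  (tau^`()).[0] != 0 ->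
  (tau^`()).[0] = - (2^-1 * (s1^`(2)).[0]) / (1 - q^-1) ->
  ((sigma2 q s1 tau)^`()).[0] != 0 ->
  (forall x, (sigma2 q s1 tau).[x] = ((sigma2 q s1 tau)^`()).[0] * (x - a2)) ->
  a1 < 0 -> 0 < b1 -> b1 < a2 ->
  a1 + b1 - (1 - q^-1) * tau.[0] / (2^-1 * (s1^`(2)).[0]) < 0 ->
  exists (P : nat -> {poly R}) (d2 : nat -> R),
    (forall n, size (P n) = n.+1 /\ solves_qEHT q s1 tau n (P n) /\ d2 n != 0) /\
    (forall m n,
       let f := fun x => (P n).[x] * (P m).[x] * rho q a1 b1 a2 x in
       cvgn (qpsum q b1 f) /\ cvgn (qpsum q a1 f) /\
       qint q a1 b1 f = d2 n * (m == n)%:R).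
Proof.
move=> /andP[q_gt0 q_lt1] size_s1 s1''_neq0 s1E size_tau _ tau'E _ sigma2E a_lt0 b_gt0 b_lt_a2 _.
have s1_2_neq0 : s1`_2 != 0.
  by move: s1''_neq0; rewrite horner0_derivn2 mulf_eq0 negb_or => /andP[].
have tau1E : tau`_1 = - s1`_2 / (1 - q^-1).
  by rewrite -horner0_deriv tau'E horner0_derivn2 mulrA mulVf ?mul1r // pnatr_eq0.
have [P P_spec] := qEHT_polynomial_solutions q_gt0 q_lt1 size_s1 size_tau tau1E s1_2_neq0.
exists P, (fun n => qint q a1 b1 (fun x => (P n).[x] * (P n).[x] * rho q a1 b1 a2 x)).
split=> [n | m n /=].
  have [sizeP solP] := P_spec n; do !split => //.
  by rewrite gt_eqF // qint_norm_gt0 // -size_poly_gt0 sizeP.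
split; first exact: is_cvg_qpsum_weight (or_intror erefl).
split; first exact: is_cvg_qpsum_weight (or_introl erefl).
have [<-|mn] := eqVneq m n; first by rewrite mulr1n mulr1.
rewrite mulr0; apply: (qint_orthogonal _ _ _ _ _ s1E sigma2E (P_spec n).2 (P_spec m).2) => //.
by apply: contra_neq mn => /(lambda_n_inj q_gt0 q_lt1 tau1E s1_2_neq0).
Qed.
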